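(* Let $\mathcal{M}^\times$ be the product MDPST of an MDPST $\mathcal{M}$ and an LDBA $\mathcal{A}$, with accepting states $\mathtt{Acc}^\times$, and let $W^\times$ be the set computed by the procedure in the context. Then $W^\times$ is a winning region of $\mathcal{M}^\times$: for every state $x\in W^\times$ there exists a strategy $\sigma^\times$ of $\mathcal{M}^\times$ starting at $x$ such that, for every nature $\gamma^\times$, the probability that the generated path visits $\mathtt{Acc}^\times$ infinitely often equals $1$. Consequently, $\max_{\sigma^\times}\min_{\gamma^\times}\Pr(\lozenge\square W^\times)=\max_{\sigma^\times}\min_{\gamma^\times}\Pr(\lozenge W^\times)$ from the initial state.
   Context: **MDPST.** A Markov decision process with set-valued transitions is $\mathcal{M}=(S,s_0,A,\mathcal{F},\mathcal{T},\mathcal{L})$: $S$ finite set of states, $s_0\in S$, $A$ finite set of actions, $\mathcal{F}:S\times A\to 2^{2^S}$ a partial function giving for each state-action pair a set of target sets, $\mathcal{T}:S\times A\times 2^S\to(0,1]$ with $\mathcal{T}(s,a,\Theta)$ the probability of moving to the set $\Theta\in\mathcal{F}(s,a)$ (these sum to 1 over $\Theta\in\mathcal{F}(s,a)$), and $\mathcal{L}:S\to 2^{\mathrm{Prop}}$ a labelling. $A(s)$ denotes the actions applicable at $s$. ${\sf Post}(s,a)=\{s'\mid\exists\Theta\in\mathcal{F}(s,a),\ \mathcal{T}(s,a,\Theta)>0,\ s'\in\Theta\}$. A path is an alternating sequence $s_0a_0s_1a_1\cdots$ with $a_i\in A(s_i)$ and $s_{i+1}\in\Theta_i$ for some $\Theta_i\in\mathcal{F}(s_i,a_i)$.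 **Feasible distributions and natures.** For $(s,a)$ with $a\in A(s)$, a distribution $h\in\mathsf{Distr}(S)$ is feasible if there are numbers $\alpha^\Theta_{s'}\ge0$ ($\Theta\in\mathcal{F}(s,a)$, $s'\in\Theta$) with $\sum_{s'\in\Theta}\alpha^\Theta_{s'}=1$ for each $\Theta$, such that $h(s')=\sum_{\Theta\in\mathcal{F}(s,a),\,s'\in\Theta}\alpha^\Theta_{s'}\mathcal{T}(s,a,\Theta)$ for $s'\in{\sf Post}(s,a)$ and $h(s')=0$ otherwise. A strategy $\sigma$ maps each finite path $\xi$ to a distribution over $A(\mathsf{lst}(\xi))$ ($\mathsf{lst}$ = last state). A nature $\gamma$ maps each finite path $\xi$ and action $a\in A(\mathsf{lst}(\xi))$ to a feasible distribution of $(\mathsf{lst}(\xi),a)$. A strategy and a nature together induce a probability measure on infinite paths. **LDBA.** $\mathcal{A}=(Q,\Sigma,q_0,\delta,\mathtt{Acc})$ with $\Sigma=2^{\mathrm{Prop}}$, $Q=Q_i\cup Q_{acc}$ disjoint, $q_0\in Q_i$, $\mathtt{Acc}\subseteq Q_{acc}$, $\delta=\delta_i\cup\delta_j\cup\delta_{acc}$ with $\delta_i:Q_i\times\Sigma\to Q_i$, $\delta_{acc}:Q_{acc}\times\Sigma\to Q_{acc}$ deterministic and $\delta_j:Q_i\times\{\epsilon\}\to 2^{Q_{acc}}$ ($\epsilon$-jumps). **Product MDPST.** $\mathcal{M}^\times$ has states $S\times Q$, initial state $(s_0,q_0)$, actions $A\cup\{\epsilon_q\mid q\in Q\}$. For $a\in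 A(s)$: with $q'=\delta(q,\mathcal{L}(s))$, $\mathcal{F}^\times((s,q),a)=\{\Theta\times\{q'\}\mid\Theta\in\mathcal{F}(s,a)\}$ and $\mathcal{T}^\times((s,q),a,\Theta\times\{q'\})=\mathcal{T}(s,a,\Theta)$. For each $q'\in\delta_j(q,\epsilon)$, action $\epsilon_{q'}$ is applicable at $(s,q)$ with $\mathcal{F}^\times((s,q),\epsilon_{q'})=\{\{(s,q')\}\}$ with probability 1. Accepting states $\mathtt{Acc}^\times=\{(s,q)\mid q\in\mathtt{Acc}\}$. **Computation of $W^\times$.** Consider the graph on $S\times Q$ with an edge $x\to x'$ whenever $x'\in\Theta$ for some $\Theta\in\mathcal{F}^\times(x,a)$. Let $S_p$ be the set of states reachable from $(s_0,q_0)$ and from which $\mathtt{Acc}^\times$ is reachable; set $\mathrm{Acc}:=\mathtt{Acc}^\times\cap S_p$. Repeat: if $\mathrm{Acc}=\emptyset$, stop with $W^\times=\emptyset$. Otherwise build the MDPST $\hat{\mathcal{M}}$ on states $(S_p\setminus\mathrm{Acc})\cup\{x^{in}\mid x\in\mathrm{Acc}\}\cup\{x^{out}\mid x\in\mathrm{Acc}\}$: each $x^{in}$ has only a self-loop (probability 1); each $x\in S_p\setminus\mathrm{Acc}$ and each $x^{out}$ has the same actions, target sets and probabilities as $x$ in $\mathcal{M}^\times$, except that every accepting element $y\in\mathrm{Acc}$ of a target set is replaced by $y^{in}$ (target states outside $S_p$ are kept as absorbing losing states). Let $V$ be the robust maximal probability of reaching $I_{in}=\{x^{in}\}$, i.e.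 $V(z)=\max_\sigma\min_\gamma\Pr(\lozenge I_{in})$ from $z$; it is the least fixed point of $V(x^{in})=1$ and $V(z)=\max_{a}\sum_{\Theta\in\hat{\mathcal{F}}(z,a)}\hat{\mathcal{T}}(z,a,\Theta)\min_{z'\in\Theta}V(z')$. If some $x\in\mathrm{Acc}$ has $V(x^{out})<1$, remove all such $x$ from $\mathrm{Acc}$, replace $S_p$ by $\{x\in S_p\setminus\mathrm{Acc}: V(x)=1\}\cup\{x\in\mathrm{Acc}:V(x^{out})=1\}$, and repeat. Otherwise stop and output $W^\times=\{x\in S_p\setminus\mathrm{Acc}:V(x)=1\}\cup\{x\in\mathrm{Acc}:V(x^{out})=1\}$. *)

From HB Require Import structures.
From mathcomp Require Import boolp classical_sets reals.
From mathcomp Require Import all_boot all_order all_algebra.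
Set Implicit Arguments. Unset Strict Implicit. Unset Printing Implicit Defensive.
Import Order.TTheory GRing.Theory Num.Theory.
Local Open Scope ring_scope.

(* act s = A(s); trans s a = F(s,a) (only meaningful for a \in act s) *)
Record mdpst (R : realType) (S A : finType) := MDPST {
  init  : S;
  act   : S -> {set A};
  trans : S -> A -> {set {set S}};
  prob  : S -> A -> {set S} -> R }.

Section MDPSTdefs.
Variables (R : realType) (S A : finType) (M : mdpst R S A).

Definition wf_mdpst : Prop :=
  forall s, act M s != set0 /\
  forall a, a \in act M s ->
    [/\ trans M s a != set0,
        (forall Th, Th \in trans M s a -> Th != set0 /\ 0 < prob M s a Th <= 1) &
        \sum_(Th in trans M s a) prob M s a Th = 1].

Definition post (s : S) (a : A) : {set S} :=
  [set s' | [exists Th in trans M s a, (0 < prob M s a Th) && (s' \in Th)]].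

Definition feasible (s : S) (a : A) (h : S -> R) : Prop :=
  exists alpha : {set S} -> S -> R,
    [/\ (forall Th s', 0 <= alpha Th s'),
        (forall Th, Th \in trans M s a -> \sum_(s' in Th) alpha Th s' = 1),
        (forall s', s' \in post s a ->
           h s' = \sum_(Th in trans M s a | s' \in Th) alpha Th s' * prob M s a Th) &
        (forall s', s' \notin post s a -> h s' = 0)].

(* finite paths s0 a0 s1 ... a_{n-1} s_n : start state and list of steps *)
Definition fpath := (S * seq (A * S))%type.
Definition lst (p : fpath) : S := last p.1 (map snd p.2).

Definition strategy := fpath -> A -> R.
Definition nature := fpath -> A -> S -> R.

Definition is_strategy (sg : strategy) : Prop :=
  forall p, [/\ (forall a, 0 <= sg p a),
                (forall a, a \notin act M (lst p) -> sg p a = 0) &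
                \sum_a sg p a = 1].

Definition is_nature (ga : nature) : Prop :=
  forall p a, a \in act M (lst p) -> feasible (lst p) a (ga p a).

(* probability weight of the finite path x, t (history h already done) *)
Fixpoint weight (sg : strategy) (ga : nature) (x : S) (h t : seq (A * S)) : R :=
  match t with
  | [::] => 1
  | st :: t' => sg (x, h) st.1 * ga (x, h) st.1 st.2 * weight sg ga x (rcons h st) t'
  end.

Definition state (x : S) (t : seq (A * S)) (m : nat) : S := nth x (x :: map snd t) m.

Definition prN (sg : strategy) (ga : nature) (x : S) (n : nat)
    (E : seq (A * S) -> bool) : R :=
  \sum_(t : n.-tuple (A * S) | E t) weight sg ga x [::] t.

(* Pr(box diamond B) = inf_n sup_N Pr(exists m in [n,N], s_m in B)  *)
Definition prBuchi (sg : strategy) (ga : nature) (x : S) (B : {set S}) : R :=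
  inf (range (fun n : nat => sup (range (fun N : nat =>
    prN sg ga x N (fun t => [exists m : 'I_N.+1, (n <= m)%N && (state x t m \in B)]))))).

(* Pr(diamond box B) = sup_n inf_N Pr(forall m in [n,N], s_m in B) *)
Definition prEvAlw (sg : strategy) (ga : nature) (x : S) (B : {set S}) : R :=
  sup (range (fun n : nat => inf (range (fun N : nat =>
    prN sg ga x N (fun t => [forall m : 'I_N.+1, (n <= m)%N ==> (state x t m \in B)]))))).

(* Pr(diamond B) = sup_N Pr(exists m <= N, s_m in B) *)
Definition prEv (sg : strategy) (ga : nature) (x : S) (B : {set S}) : R :=
  sup (range (fun N : nat =>
    prN sg ga x N (fun t => [exists m : 'I_N.+1, state x t m \in B]))).

Definition value (x : S) (f : strategy -> nature -> S -> R) : R :=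
  sup (fun v : R => exists sg, is_strategy sg /\
         v = inf (fun r : R => exists ga, is_nature ga /\ r = f sg ga x)).

Definition edge : rel S :=
  fun x y => [exists a, (a \in act M x) && [exists Th, (Th \in trans M x a) && (y \in Th)]].

Definition Sp0 (Acc : {set S}) : {set S} :=
  [set x | connect edge (init M) x && [exists y in Acc, connect edge x y]].

(* value of target y in the MDPST M-hat: y^in has value 1, non accepting
   states of S_p have value V, states outside S_p are absorbing losing *)
Definition tval (Sp Acc : {set S}) (V : S -> R) (y : S) : R :=
  if y \in Acc then 1 else if y \in Sp then V y else 0.

Definition bell (val : S -> R) (x : S) : R :=
  \big[Num.max/0]_(a in act M x)
     \sum_(Th in trans M x a) prob M x a Th * \big[Num.min/1]_(y in Th) val y.

(* V on S_p \ Acc, Vout on x^out for x in Acc *)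
Definition fixedpt (Sp Acc : {set S}) (V Vout : S -> R) : Prop :=
  (forall x, x \in Sp :\: Acc -> V x = bell (tval Sp Acc V) x) /\
  (forall x, x \in Acc -> Vout x = bell (tval Sp Acc V) x).

Definition unit_valued (Sp Acc : {set S}) (V Vout : S -> R) : Prop :=
  (forall x, x \in Sp :\: Acc -> 0 <= V x <= 1) /\
  (forall x, x \in Acc -> 0 <= Vout x <= 1).

Definition is_lfp (Sp Acc : {set S}) (V Vout : S -> R) : Prop :=
  [/\ fixedpt Sp Acc V Vout, unit_valued Sp Acc V Vout &
      forall U Uout, fixedpt Sp Acc U Uout -> unit_valued Sp Acc U Uout ->
        (forall x, x \in Sp :\: Acc -> V x <= U x) /\
        (forall x, x \in Acc -> Vout x <= Uout x)].

Definition nextSp (Sp Acc : {set S}) (V Vout : S -> R) : {set S} :=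
  [set x in Sp :\: Acc | V x == 1] :|: [set x in Acc | Vout x == 1].

(* compW Sp Acc W : the loop started with (Sp, Acc) outputs W *)
Inductive compW : {set S} -> {set S} -> {set S} -> Prop :=
| compW_empty Sp Acc : Acc = set0 -> compW Sp Acc set0
| compW_stop Sp Acc V Vout : Acc != set0 -> is_lfp Sp Acc V Vout ->
    (forall x, x \in Acc -> Vout x = 1) ->
    compW Sp Acc (nextSp Sp Acc V Vout)
| compW_step Sp Acc V Vout W : Acc != set0 -> is_lfp Sp Acc V Vout ->
    (exists2 x, x \in Acc & Vout x < 1) ->
    compW (nextSp Sp Acc V Vout) [set x in Acc | Vout x == 1] W ->
    compW Sp Acc W.

Definition computeW (AccX : {set S}) (W : {set S}) : Prop :=
  compW (Sp0 AccX) (AccX :&: Sp0 AccX) W.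

End MDPSTdefs.

Record ldba (AP Qi Qa : finType) := LDBA {
  q0    : Qi;
  accQ  : {set Qa};
  d_i   : Qi -> {set AP} -> Qi;
  d_acc : Qa -> {set AP} -> Qa;
  d_j   : Qi -> {set Qa} }.

Section Product.
Variables (R : realType) (S A AP Qi Qa : finType).
Variables (M : mdpst R S A) (L : S -> {set AP}) (B : ldba AP Qi Qa).

Definition Q : finType := (Qi + Qa)%type.

Definition delta (q : Q) (l : {set AP}) : Q :=
  match q with inl qi => inl (d_i B qi l) | inr qa => inr (d_acc B qa l) end.

(* actions A + {eps_q | q in Q} *)
Definition pact (x : (S * Q)%type) : {set (A + Q)%type} :=
  [set (inl a : A + Q) | a in act M x.1] :|:
  match x.2 with
  | inl qi => [set (inr (inr q') : A + Q) | q' in d_j B qi]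
  | inr _ => set0
  end.

Definition ptrans (x : (S * Q)%type) (b : A + Q) : {set {set (S * Q)%type}} :=
  match b with
  | inl a => [set setX Th [set delta x.2 (L x.1)] | Th in trans M x.1 a]
  | inr q' => if b \in pact x then [set [set (x.1, q')]] else set0
  end.

Definition pprob (x : (S * Q)%type) (b : A + Q) (Th' : {set (S * Q)%type}) : R :=
  match b with
  | inl a => prob M x.1 a [set s | (s, delta x.2 (L x.1)) \in Th']
  | inr _ => 1
  end.

Definition product : mdpst R (S * Q)%type (A + Q)%type :=
  MDPST (init M, inl (q0 B)) pact ptrans pprob.

Definition accX : {set (S * Q)%type} :=
  [set x | if x.2 is inr qa then qa \in accQ B else false].

End Product.
Arguments accX {S AP Qi Qa} B.

From Pilot Require Import Defs.
From HB Require Import structures.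
From mathcomp Require Import boolp classical_sets reals.
From mathcomp Require Import all_boot all_order all_algebra.
From mathcomp Require Import lra.
Import Order.TTheory GRing.Theory Num.Theory.
Local Open Scope ring_scope.
Set Implicit Arguments. Unset Strict Implicit. Unset Printing Implicit Defensive.

(* On the output W of the procedure, the least fixed point of the last round
   is 1, so every state of W has a safe action: one whose target sets all lie
   in W.  Leastness gives more: W lies in the attractor of the accepting states
   through safe actions, since lowering the value to a constant c < 1 on the
   part of W outside that attractor still yields a pre-fixed point (every safe
   action from there can be forced back outside, every unsafe one is worth at
   most c).  The memoryless strategy playing safe actions that decrease the
   attractor rank therefore stays in W and, against any nature, meets an
   accepting state within |S| steps with probability at least p^|S|, p the
   least transition probability; avoiding acceptance for j|S| steps has
   probability at most (1 - p^|S|)^j, so acceptance recurs almost surely.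
   Closedness of W also lets any strategy switch to safe actions once W is
   reached; the switched strategy stays in W forever with at least the
   probability with which the original one reaches W, and the converse
   inequality is trivial. *)

Section Limits.
Variable R : realType.
Implicit Types (u : nat -> R) (r e c : R).

Lemma bernoulli_expr r j : 0 <= r <= 1 -> r ^+ j * (1 + j%:R * (1 - r)) <= 1.
Proof.
move=> /andP[r0 r1]; elim: j => [|j IH]; first by rewrite expr0 mul0r addr0 mulr1.
have rj0 : 0 <= r ^+ j by rewrite exprn_ge0.
have rj1 : r * r ^+ j <= 1 by rewrite -exprS exprn_ile1.
have := ler_wpM2l r0 IH; rewrite exprS -natr1; nra.
Qed.

Lemma exists_expr_lt r e : 0 <= r < 1 -> 0 < e -> exists j : nat, r ^+ j < e.
Proof.
move=> /andP[r0 r1] e0; have q0 : 0 < 1 - r by rewrite subr_gt0.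
have eq0 : 0 < e * (1 - r) by rewrite mulr_gt0.
pose j := Num.Def.archi_bound (e * (1 - r))^-1; exists j.
have : (e * (1 - r))^-1 < j%:R by rewrite archi_boundP // invr_ge0 ltW.
rewrite -div1r ltr_pdivrMr //.
have r01 : 0 <= r <= 1 by rewrite r0 ltW.
have := bernoulli_expr j r01.
have := exprn_ge0 j r0; have : 0 <= j%:R :> R := ler0n _ _.
set a := r ^+ j; set b := j%:R; nra.
Qed.

Lemma ge_sup_range u c : (forall n, u n <= c) -> sup (range u) <= c.
Proof. by move=> uc; apply: ge_sup; [exists (u 0%N), 0%N|move=> _ [n _ <-]]. Qed.

Lemma le_sup_range u c n : (forall n, u n <= c) -> u n <= sup (range u).
Proof. by move=> uc; apply: ub_le_sup; [exists c => _ [m _ <-]|exists n]. Qed.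

Lemma le_inf_range u c : (forall n, c <= u n) -> c <= inf (range u).
Proof. by move=> cu; apply: lb_le_inf; [exists (u 0%N), 0%N|move=> _ [n _ <-]]. Qed.

Lemma ge_inf_range u c n : (forall n, c <= u n) -> inf (range u) <= u n.
Proof. by move=> cu; apply: ge_inf; [exists c => _ [m _ <-]|exists n]. Qed.

Lemma sup_range_itv u : (forall n, 0 <= u n <= 1) -> 0 <= sup (range u) <= 1.
Proof.
move=> u01; rewrite ge_sup_range ?andbT => [|n]; last by case/andP: (u01 n).
apply: le_trans (_ : u 0%N <= _); first by case/andP: (u01 0%N).
by apply: (@le_sup_range _ 1) => n; case/andP: (u01 n).
Qed.

Lemma inf_range_itv u : (forall n, 0 <= u n <= 1) -> 0 <= inf (range u) <= 1.
Proof.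
move=> u01; rewrite le_inf_range => [|n]; last by case/andP: (u01 n).
apply: le_trans (_ : _ <= u 0%N) _; last by case/andP: (u01 0%N).
by apply: (@ge_inf_range _ 0) => n; case/andP: (u01 n).
Qed.

Lemma sup_range_eq1 u : (forall n, u n <= 1) ->
  (forall e, 0 < e -> exists n, 1 - e < u n) -> sup (range u) = 1.
Proof.
move=> u1 near1; apply/eqP; rewrite eq_le ge_sup_range //=; apply: contraT.
rewrite -ltNge -subr_gt0 => /near1[n].
by rewrite opprB addrC subrK ltNge (le_sup_range n u1).
Qed.

Lemma inf_range_cst u c : (forall n, u n = c) -> inf (range u) = c.
Proof.
move=> uc; apply/eqP; rewrite eq_le le_inf_range => [|n]; last by rewrite uc.
by rewrite -[leRHS](uc 0%N) (@ge_inf_range _ c) // => n; rewrite uc.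
Qed.

End Limits.

Section WellFormed.
Variables (R : realType) (S A : finType) (M : mdpst R S A).
Hypothesis wfM : wf_mdpst M.

Lemma act_neq0 s : act M s != set0.
Proof. by have [] := wfM s. Qed.

Lemma trans_neq0 s a : a \in act M s -> trans M s a != set0.
Proof. by move=> aA; have [_ /(_ a aA) []] := wfM s. Qed.

Lemma target_neq0 s a Th : a \in act M s -> Th \in trans M s a -> Th != set0.
Proof. by move=> aA ThT; have [_ /(_ a aA) [_ /(_ Th ThT) []]] := wfM s. Qed.

Lemma prob_itv s a Th : a \in act M s -> Th \in trans M s a -> 0 < prob M s a Th <= 1.
Proof. by move=> aA ThT; have [_ /(_ a aA) [_ /(_ Th ThT) []]] := wfM s. Qed.

Lemma prob_ge0 s a Th : a \in act M s -> Th \in trans M s a -> 0 <= prob M s a Th.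
Proof. by move=> aA ThT; have /andP[/ltW] := prob_itv aA ThT. Qed.

Lemma sum_prob s a : a \in act M s -> \sum_(Th in trans M s a) prob M s a Th = 1.
Proof. by move=> aA; have [_ /(_ a aA) []] := wfM s. Qed.

Lemma trans_sub_post s a Th : a \in act M s -> Th \in trans M s a -> Th \subset post M s a.
Proof.
move=> aA ThT; apply/subsetP => s' s'Th; rewrite inE; apply/existsP; exists Th.
by have /andP[-> _] := prob_itv aA ThT; rewrite ThT s'Th.
Qed.

Definition min_prob : R := \big[Num.min/1]_(s : S) \big[Num.min/1]_(a in act M s)
  \big[Num.min/1]_(Th in trans M s a) prob M s a Th.

Lemma min_prob_gt0 : 0 < min_prob.
Proof.
apply/bigmin_gtP; split=> // s _; apply/bigmin_gtP; split=> // a aA.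
by apply/bigmin_gtP; split=> // Th ThT; case/andP: (prob_itv aA ThT).
Qed.

Lemma min_prob_le1 : min_prob <= 1.
Proof. exact: bigmin_le_id. Qed.

Lemma min_prob_le s a Th : a \in act M s -> Th \in trans M s a -> min_prob <= prob M s a Th.
Proof.
move=> aA ThT; apply: le_trans (bigmin_le_cond 1 _ (isT : xpredT s)) _ => /=.
by apply: le_trans (bigmin_le_cond 1 _ aA) _; apply: bigmin_le_cond.
Qed.

Section Feasible.
Variables (s : S) (a : A) (h : S -> R).
Hypotheses (aA : a \in act M s) (hF : feasible M s a h).

Lemma feasible_ge0 s' : 0 <= h s'.
Proof.
have [al [al0 _ hpost hout]] := hF.
have [/hpost ->|/hout -> //] := boolP (s' \in post M s a).
by apply: sumr_ge0 => Th /andP[ThT _]; rewrite mulr_ge0 ?prob_ge0.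
Qed.

Lemma feasible_notin_post s' : s' \notin post M s a -> h s' = 0.
Proof. by have [al [_ _ _ hout]] := hF; apply: hout. Qed.

Lemma feasible_sum1 : \sum_s' h s' = 1.
Proof.
have [al [_ al1 hpost hout]] := hF.
rewrite (bigID (mem (post M s a))) /= [X in _ + X]big1 ?addr0; last by move=> s' /hout.
rewrite (eq_bigr _ hpost); under eq_bigr do rewrite big_mkcond /=.
rewrite exchange_big /= -(sum_prob aA) [LHS](bigID (mem (trans M s a))) /=.
rewrite [X in _ + X]big1 ?addr0; last first.
  by move=> Th /negbTE ThT; apply: big1 => s' _; rewrite ThT.
apply: eq_bigr => Th ThT; rewrite ThT -big_mkcondr /= -mulr_suml.
rewrite (eq_bigl (mem Th)) ?al1 ?mul1r // => s'.
by rewrite andb_idl // => /(subsetP (trans_sub_post aA ThT)).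
Qed.

Lemma feasible_mass Th : Th \in trans M s a -> prob M s a Th <= \sum_(s' in Th) h s'.
Proof.
move=> ThT; have [al [al0 al1 hpost _]] := hF.
rewrite -[X in X <= _]mul1r -(al1 Th ThT) mulr_suml; apply: ler_sum => s' s'Th.
rewrite hpost ?(subsetP (trans_sub_post aA ThT)) // (bigD1 Th) ?ThT //=.
rewrite lerDl; apply: sumr_ge0 => Th' /andP[/andP[Th'T _] _].
by rewrite mulr_ge0 ?prob_ge0.
Qed.

End Feasible.
End WellFormed.

Section Paths.
Variables (S A : finType) (x : S).
Implicit Types (h t : seq (A * S)).

Lemma state_cat h t m : (m <= size h)%N -> state x (h ++ t) m = state x h m.
Proof. by move=> mh; rewrite /state map_cat -cat_cons nth_cat /= size_map ltnS mh. Qed.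

Lemma state_rcons h st : state x (rcons h st) (size h).+1 = st.2.
Proof. by rewrite /state map_rcons -rcons_cons nth_rcons /= size_map ltnn eqxx. Qed.

Lemma lst_state h : lst (x, h) = state x h (size h).
Proof.
by rewrite /lst /state /= -(size_map snd) -[size _]/((size (x :: map snd h)).-1) nth_last.
Qed.

Lemma lst_rcons h st : lst (x, rcons h st) = st.2.
Proof. by rewrite /lst /= map_rcons last_rcons. Qed.

Lemma exists_state_cat (P : nat -> S -> bool) h t :
  [exists m : 'I_(size h).+1, P m (state x h m)] ->
  [exists m : 'I_(size (h ++ t)).+1, P m (state x (h ++ t) m)].
Proof.
move=> /existsP[m Pm]; have mh : (m <= size h)%N by rewrite -ltnS.
have mht : (m < (size (h ++ t)).+1)%N by rewrite ltnS size_cat (leq_trans mh) ?leq_addr.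
by apply/existsP; exists (Ordinal mht); rewrite /= state_cat.
Qed.

Lemma forall_state_cat (P : nat -> S -> bool) h t :
  [forall m : 'I_(size (h ++ t)).+1, P m (state x (h ++ t) m)] ->
  [forall m : 'I_(size h).+1, P m (state x h m)].
Proof.
by apply: contraLR; rewrite !negb_forall; apply: (@exists_state_cat (fun m s => ~~ P m s)).
Qed.

Variable B : {set S}.

Definition visits_after L t :=
  [exists m : 'I_(size t).+1, (L < m)%N && (state x t m \in B)].

Definition avoids_from n t :=
  [forall m : 'I_(size t).+1, (n <= m)%N ==> (state x t m \notin B)].

Lemma visits_after_cat L h t : visits_after L h -> visits_after L (h ++ t).
Proof. exact: (@exists_state_cat (fun m s => (L < m)%N && (s \in B))). Qed.

Lemma avoids_from_cat n h t : avoids_from n (h ++ t) -> avoids_from n h.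
Proof. exact: (@forall_state_cat (fun m s => (n <= m)%N ==> (s \notin B))). Qed.

Lemma visits_after_rcons L h st : (L <= size h)%N -> st.2 \in B -> visits_after L (rcons h st).
Proof.
move=> Lh sB; have mlt : ((size h).+1 < (size (rcons h st)).+1)%N by rewrite size_rcons.
by apply/existsP; exists (Ordinal mlt); rewrite /= state_rcons sB ltnS Lh.
Qed.

Lemma visits_afterS L t : visits_after L.+1 t -> visits_after L t.
Proof.
by case/existsP=> m /andP[Lm mB]; apply/existsP; exists m; rewrite mB (ltn_trans _ Lm).
Qed.

Lemma avoids_from_visits_after n L t : (n <= L)%N -> avoids_from n t -> ~~ visits_after L t.
Proof.
move=> nL /forallP avoid; apply/existsPn => m; apply: contraTN (avoid m) => /andP[Lm mB].
by rewrite negb_imply negbK mB (leq_trans nL) // ltnW.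
Qed.

End Paths.

Section Expectation.
Variables (R : realType) (S A : finType) (M : mdpst R S A).
Hypothesis wfM : wf_mdpst M.
Variables (sg : strategy R S A) (ga : nature R S A) (x : S).
Implicit Types (h t : seq (A * S)) (f g : seq (A * S) -> R).

Definition step h (st : A * S) : R := sg (x, h) st.1 * ga (x, h) st.1 st.2.

Definition expect h n f : R :=
  \sum_(t : n.-tuple (A * S)) weight sg ga x h t * f (h ++ t).

Lemma expect0 h f : expect h 0 f = f h.
Proof.
rewrite /expect (big_pred1 [tuple]) /= ?mul1r ?cats0 // => t.
by apply/esym/eqP; apply: tuple0.
Qed.

Lemma expectS h n f :
  expect h n.+1 f = \sum_(st : A * S) step h st * expect (rcons h st) n f.
Proof.
rewrite /expect (reindex (fun p : (A * S) * n.-tuple (A * S) => [tuple of p.1 :: p.2])) /=.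
  under [RHS]eq_bigr do rewrite mulr_sumr.
  by rewrite pair_big; apply: eq_bigr => -[st t] _ /=; rewrite cat_rcons !mulrA.
exists (fun u : n.+1.-tuple (A * S) => (thead u, behead_tuple u)) => [[st t] _|u _] /=.
  by rewrite theadE; congr pair; apply: val_inj.
by rewrite -tuple_eta.
Qed.

Lemma expect_split h n m f : expect h (n + m) f = expect h n (fun h' => expect h' m f).
Proof.
elim: n h => [|n IH] h; first by rewrite expect0.
by rewrite addSn !expectS; apply: eq_bigr => st _; rewrite IH.
Qed.

Lemma eq_expect h n f g : (forall t, size t = n -> f (h ++ t) = g (h ++ t)) ->
  expect h n f = expect h n g.
Proof. by move=> fg; apply: eq_bigr => t _; rewrite fg ?size_tuple. Qed.

Lemma expectB h n f g : expect h n (fun t => f t - g t) = expect h n f - expect h n g.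
Proof. by rewrite /expect -sumrB; apply: eq_bigr => t _; rewrite mulrBr. Qed.

Lemma expectZ h n c f : expect h n (fun t => c * f t) = c * expect h n f.
Proof. by rewrite /expect mulr_sumr; apply: eq_bigr => t _; rewrite mulrCA. Qed.

Lemma prNE n E : prN sg ga x n E = expect [::] n (fun t => (E t)%:R).
Proof.
rewrite /prN /expect big_mkcond; apply: eq_bigr => t _ /=.
by case: (E t); rewrite ?mulr1 ?mulr0.
Qed.

Hypotheses (sgS : is_strategy M sg) (gaN : is_nature M ga).

Lemma step_ge0 h st : 0 <= step h st.
Proof.
have [sg0 sg_out _] := sgS (x, h); rewrite /step.
have [aA|/sg_out ->] := boolP (st.1 \in act M (lst (x, h))); last by rewrite mul0r.
by rewrite mulr_ge0 // (feasible_ge0 wfM aA (gaN aA)).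
Qed.

Lemma step_support h a s : step h (a, s) != 0 ->
  [/\ 0 < sg (x, h) a, a \in act M (lst (x, h)) & s \in post M (lst (x, h)) a].
Proof.
have [sg0 sg_out _] := sgS (x, h); rewrite /step.
have [aA|/sg_out ->] := boolP (a \in act M (lst (x, h))); last by rewrite mul0r eqxx.
have [sP|sP] := boolP (s \in post M (lst (x, h)) a); last first.
  by rewrite (feasible_notin_post (gaN aA) sP) mulr0 eqxx.
by rewrite mulf_eq0 negb_or => /andP[sg_neq0 _]; rewrite lt_def sg_neq0 sg0.
Qed.

Lemma sum_step h : \sum_(st : A * S) step h st = 1.
Proof.
have [_ sg_out sg1] := sgS (x, h).
transitivity (\sum_(a : A) \sum_(s : S) step h (a, s)).
  by rewrite pair_big; apply: eq_bigr => -[].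
rewrite -[RHS]sg1; apply: eq_bigr => a _; rewrite /step /= -mulr_sumr.
have [aA|/sg_out ->] := boolP (a \in act M (lst (x, h))); last by rewrite mul0r.
by rewrite (feasible_sum1 wfM aA (gaN aA)) mulr1.
Qed.

Lemma expect_cst h n c : expect h n (fun=> c) = c.
Proof.
elim: n h => [|n IH] h; first by rewrite expect0.
by rewrite expectS; under eq_bigr do rewrite IH; rewrite -mulr_suml sum_step mul1r.
Qed.

Lemma expect_eq_cst h n f c : (forall t, size t = n -> f (h ++ t) = c) ->
  expect h n f = c.
Proof. by move=> fc; rewrite -(expect_cst h n c); apply: eq_expect. Qed.

Lemma ler_expect (P : seq (A * S) -> Prop) n h f g :
  (forall h a s, P h -> step h (a, s) != 0 -> P (rcons h (a, s))) -> P h ->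
  (forall t, size t = n -> P (h ++ t) -> f (h ++ t) <= g (h ++ t)) ->
  expect h n f <= expect h n g.
Proof.
move=> Pstep; elim: n h => [|n IH] h Ph fg.
  by rewrite !expect0; have := fg [::]; rewrite cats0; apply.
rewrite !expectS; apply: ler_sum => -[a s] _.
have [->|st_neq0] := eqVneq (step h (a, s)) 0; first by rewrite !mul0r.
apply: ler_wpM2l; first exact: step_ge0.
apply: IH => [|t tn]; first exact: Pstep.
by rewrite cat_rcons; apply: fg; rewrite /= tn.
Qed.

Lemma ler_expect_all n h f g : (forall t, size t = n -> f (h ++ t) <= g (h ++ t)) ->
  expect h n f <= expect h n g.
Proof. by move=> fg; apply: (@ler_expect xpredT) => // t /fg. Qed.

Lemma expect_ge0 h n f : (forall t, 0 <= f t) -> 0 <= expect h n f.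
Proof. by move=> f0; rewrite -(expect_cst h n 0); apply: ler_expect_all. Qed.

Lemma expect_le1 h n f : (forall t, f t <= 1) -> expect h n f <= 1.
Proof. by move=> f1; rewrite -[leRHS](expect_cst h n 1); apply: ler_expect_all. Qed.

Lemma expect_step_ge h k f a Th (b : R) : (forall t, 0 <= f t) -> 0 <= b ->
  sg (x, h) a = 1 -> Th \in trans M (lst (x, h)) a ->
  (forall s, s \in Th -> b <= expect (rcons h (a, s)) k f) ->
  b * prob M (lst (x, h)) a Th <= expect h k.+1 f.
Proof.
move=> f0 b0 sg1 ThT b_le; have [_ sg_out _] := sgS (x, h).
have aA : a \in act M (lst (x, h)).
  by apply: contraT => /sg_out/eqP; rewrite sg1 oner_eq0.
rewrite expectS (bigID (fun st : A * S => (st.1 == a) && (st.2 \in Th))) /=.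
rewrite -[leLHS]addr0 lerD ?sumr_ge0 // => [|st _]; last first.
  exact: mulr_ge0 (step_ge0 h st) (expect_ge0 _ _ f0).
rewrite (reindex_onto (fun s => (a, s)) snd) => [|[a' s] /andP[/eqP /= -> _] //].
rewrite (eq_bigl (fun s => s \in Th)) => [|s]; last by rewrite /= eqxx eqxx andbT.
apply: le_trans (_ : \sum_(s in Th) ga (x, h) a s * b <= _).
  rewrite -mulr_suml [leRHS]mulrC; apply: (ler_wpM2l b0).
  exact: (feasible_mass wfM aA (gaN aA) ThT).
apply: ler_sum => s sTh; rewrite /step /= sg1 mul1r.
by apply: ler_wpM2l; [exact: (feasible_ge0 wfM aA (gaN aA) s)|exact: b_le].
Qed.

Lemma prN_ge0 n E : 0 <= prN sg ga x n E.
Proof. by rewrite prNE expect_ge0 // => t; rewrite ler0n. Qed.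

Lemma prN_le1 n E : prN sg ga x n E <= 1.
Proof. by rewrite prNE expect_le1 // => t; rewrite lern1 leq_b1. Qed.

End Expectation.

Section Bellman.
Variables (R : realType) (S A : finType) (M : mdpst R S A).
Hypothesis wfM : wf_mdpst M.
Implicit Types (val : S -> R) (y : S) (a : A).

Definition qval val y a : R :=
  \sum_(Th in trans M y a) prob M y a Th * \big[Num.min/1]_(z in Th) val z.

Lemma bellE val y : bell M val y = \big[Num.max/0]_(a in act M y) qval val y a.
Proof. by []. Qed.

Lemma bigmin_itv01 val (Th : {set S}) : (forall z, 0 <= val z <= 1) ->
  0 <= \big[Num.min/1]_(z in Th) val z <= 1.
Proof.
move=> v01; rewrite bigmin_le_id andbT.
by apply/bigmin_geP; split=> // z _; case/andP: (v01 z).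
Qed.

Lemma qval_itv val y a : (forall z, 0 <= val z <= 1) -> a \in act M y ->
  0 <= qval val y a <= 1.
Proof.
move=> v01 aA; apply/andP; split.
  apply: sumr_ge0 => Th ThT.
  by rewrite mulr_ge0 ?(prob_ge0 wfM) //; case/andP: (bigmin_itv01 Th v01).
rewrite -(sum_prob wfM aA); apply: ler_sum => Th ThT.
rewrite ler_piMr ?(prob_ge0 wfM) //; by case/andP: (bigmin_itv01 Th v01).
Qed.

Lemma bell_itv val y : (forall z, 0 <= val z <= 1) -> 0 <= bell M val y <= 1.
Proof.
move=> v01; rewrite bellE; apply/andP; split; first by apply/bigmax_geP; left.
by apply/bigmax_leP; split=> // a aA; case/andP: (qval_itv v01 aA).
Qed.

Lemma le_qval val1 val2 y a : (forall z, val1 z <= val2 z) -> a \in act M y ->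
  qval val1 y a <= qval val2 y a.
Proof.
move=> le12 aA; apply: ler_sum => Th ThT.
by rewrite ler_wpM2l ?(prob_ge0 wfM) //; apply: le_bigmin2 => z _.
Qed.

Lemma le_bell val1 val2 y : (forall z, val1 z <= val2 z) -> bell M val1 y <= bell M val2 y.
Proof. by move=> le12; apply: le_bigmax2 => a; apply: le_qval. Qed.

Lemma qval_lt1 val y a Th z : (forall z, 0 <= val z <= 1) -> a \in act M y ->
  Th \in trans M y a -> z \in Th -> val z < 1 -> qval val y a < 1.
Proof.
move=> v01 aA ThT zTh vz1; rewrite /qval (bigD1 Th) //=.
rewrite -[ltRHS](sum_prob wfM aA) [ltRHS](bigD1 Th) //=.
apply: ltr_leD.
  have /andP[p0 _] := prob_itv wfM aA ThT.
  by rewrite gtr_pMr // (le_lt_trans (bigmin_le_cond _ _ zTh)).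
apply: ler_sum => Th' /andP[Th'T _].
by rewrite ler_piMr ?(prob_ge0 wfM) //; case/andP: (bigmin_itv01 Th' v01).
Qed.

Lemma bell_eq1 val y : (forall z, 0 <= val z <= 1) -> bell M val y = 1 ->
  exists2 a, a \in act M y & forall Th, Th \in trans M y a -> {in Th, forall z, val z = 1}.
Proof.
move=> v01 b1.
suff /existsP[a /andP[aA /forallP all1]] :
    [exists a in act M y, [forall Th in trans M y a, [forall z in Th, val z == 1]]].
  exists a => // Th ThT z zTh; apply/eqP.
  by move: (all1 Th); rewrite ThT => /forallP/(_ z); rewrite zTh.
apply: contraT => /existsPn none.
suff: bell M val y < 1 by rewrite b1 ltxx.
rewrite bellE; apply/bigmax_ltP; split=> // a aA.
move: (none a); rewrite aA negb_forall => /existsP[Th].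
rewrite negb_imply negb_forall => /andP[ThT /existsP[z]].
rewrite negb_imply => /andP[zTh vz1]; apply: (qval_lt1 v01 aA ThT zTh).
by rewrite lt_neqAle vz1; case/andP: (v01 z).
Qed.

End Bellman.

Section LeastFixedPoint.
Variables (R : realType) (S A : finType) (M : mdpst R S A).
Hypothesis wfM : wf_mdpst M.
Variables (Sp Acc : {set S}).
Implicit Types U : S -> R.

Local Notation tv := (Defs.tval Sp Acc).

Definition prefixed U : Prop :=
  (forall z, z \in Sp :\: Acc -> 0 <= U z <= 1) /\
  (forall z, z \in Sp :\: Acc -> bell M (tv U) z <= U z).

Lemma tval_itv U : (forall z, z \in Sp :\: Acc -> 0 <= U z <= 1) ->
  forall y, 0 <= tv U y <= 1.
Proof.
move=> U01 y; rewrite /Defs.tval; case: ifPn => yA; first by rewrite ler01 lexx.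
by case: ifPn => ySp; [apply: U01; rewrite inE yA|rewrite lexx ler01].
Qed.

Lemma le_tval U1 U2 : (forall z, z \in Sp :\: Acc -> U1 z <= U2 z) ->
  forall y, tv U1 y <= tv U2 y.
Proof.
move=> le12 y; rewrite /Defs.tval; case: ifPn => yA //; case: ifPn => ySp //.
by apply: le12; rewrite inE yA.
Qed.

Lemma prefixed1 : prefixed (fun=> 1).
Proof.
have one01 z : z \in Sp :\: Acc -> 0 <= (1 : R) <= 1 by rewrite ler01 lexx.
by split=> // z _; case/andP: (bell_itv wfM z (tval_itv one01)).
Qed.

Definition inf_prefixed z : R := inf [set U z | U in prefixed].

Lemma inf_prefixed_le U z : z \in Sp :\: Acc -> prefixed U -> inf_prefixed z <= U z.
Proof.
move=> zS preU; apply: ge_inf; last by exists U.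
by exists 0 => _ [U' [U'01 _] <-]; case/andP: (U'01 z zS).
Qed.

Lemma inf_prefixed_itv z : z \in Sp :\: Acc -> 0 <= inf_prefixed z <= 1.
Proof.
move=> zS; rewrite inf_prefixed_le ?andbT //; last exact: prefixed1.
apply: lb_le_inf; first by exists 1, (fun=> 1); first exact: prefixed1.
by move=> _ [U [U01 _] <-]; case/andP: (U01 z zS).
Qed.

Lemma prefixed_inf : prefixed inf_prefixed.
Proof.
split=> [|z zS]; first exact: inf_prefixed_itv.
apply: lb_le_inf; first by exists 1, (fun=> 1); first exact: prefixed1.
move=> _ [U preU <-]; apply: le_trans (proj2 preU z zS).
by apply: le_bell => //; apply: le_tval => w wS; apply: inf_prefixed_le.
Qed.

Lemma inf_prefixed_fixed z : z \in Sp :\: Acc -> inf_prefixed z = bell M (tv inf_prefixed) z.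
Proof.
move=> zS; apply/eqP; rewrite eq_le (proj2 prefixed_inf z zS) andbT.
apply: inf_prefixed_le => //; split=> w wS.
  exact: (bell_itv wfM w (tval_itv inf_prefixed_itv)).
by apply: le_bell => //; apply: le_tval => v vS; apply: (proj2 prefixed_inf v vS).
Qed.

Lemma lfp_le_prefixed V Vout U : is_lfp M Sp Acc V Vout -> prefixed U ->
  forall z, z \in Sp :\: Acc -> V z <= U z.
Proof.
move=> [_ _ leastV] preU z zS.
have inf_fixed : fixedpt M Sp Acc inf_prefixed (bell M (tv inf_prefixed)).
  by split=> // w wS; apply: inf_prefixed_fixed.
have inf_itv : unit_valued Sp Acc inf_prefixed (bell M (tv inf_prefixed)).
  split=> [w|w _]; first exact: inf_prefixed_itv.
  exact: (bell_itv wfM w (tval_itv inf_prefixed_itv)).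
have [le_inf _] := leastV _ _ inf_fixed inf_itv.
exact: le_trans (le_inf z zS) (inf_prefixed_le zS preU).
Qed.

End LeastFixedPoint.

Section Strategies.
Variables (R : realType) (S A : finType) (M : mdpst R S A).
Hypothesis wfM : wf_mdpst M.
Variable a0 : A.
Implicit Types (y : S) (a : A) (W : {set S}).

Definition safe W a y := (a \in act M y) && [forall Th in trans M y a, Th \subset W].

Definition some_act y : A := odflt a0 [pick a in act M y].

Definition choose_act (P : A -> S -> bool) y : A := odflt (some_act y) [pick a | P a y].

Lemma some_act_in y : some_act y \in act M y.
Proof.
rewrite /some_act; case: pickP => [a //|none] /=.
by have /set0Pn[a aA] := act_neq0 wfM y; move: (none a); rewrite aA.
Qed.

Lemma choose_act_in (P : A -> S -> bool) y : (forall a, P a y -> a \in act M y) ->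
  choose_act P y \in act M y.
Proof.
by move=> Pact; rewrite /choose_act; case: pickP => [a /Pact|_] //=; apply: some_act_in.
Qed.

Lemma choose_actP (P : A -> S -> bool) a y : P a y -> P (choose_act P y) y.
Proof. by move=> Pa; rewrite /choose_act; case: pickP => [b //|/(_ a)]; rewrite Pa. Qed.

Definition memoryless (f : S -> A) : strategy R S A := fun p a => (a == f (lst p))%:R.

Lemma memoryless_is_strategy f : (forall y, f y \in act M y) -> is_strategy M (memoryless f).
Proof.
move=> f_act p; split=> [a|a aA|]; rewrite /memoryless ?ler0n //.
  by case: eqP aA => // ->; rewrite f_act.
by rewrite (bigD1 (f (lst p))) //= eqxx big1 ?addr0 // => a /negbTE ->.
Qed.

Lemma memoryless_gt0 f p a : 0 < memoryless f p a -> a = f (lst p).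
Proof. by rewrite /memoryless; case: eqP => // _; rewrite ltxx. Qed.

Lemma step_safe W sg ga x h a s : is_strategy M sg -> is_nature M ga ->
  safe W a (lst (x, h)) -> step sg ga x h (a, s) != 0 -> s \in W.
Proof.
move=> sgS gaN /andP[_ /forallP safe_a] /(step_support sgS gaN)[_ _].
rewrite inE => /existsP[Th /andP[ThT /andP[_ sTh]]].
by move: (safe_a Th); rewrite ThT => /subsetP; apply.
Qed.

End Strategies.

Section WinningRegion.
Variables (R : realType) (S A : finType) (M : mdpst R S A).
Hypothesis wfM : wf_mdpst M.
Variables (Sp Acc : {set S}) (V Vout : S -> R).
Hypotheses (lfpV : is_lfp M Sp Acc V Vout) (Vout1 : forall x, x \in Acc -> Vout x = 1).

Local Notation tv := (Defs.tval Sp Acc).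
Local Notation W := (nextSp Sp Acc V Vout).

Lemma mem_W y : (y \in W) = (y \in Acc) || (y \in Sp :\: Acc) && (V y == 1).
Proof.
rewrite /nextSp !inE; case yA: (y \in Acc) => /=; last by rewrite orbF.
by rewrite Vout1 // eqxx.
Qed.

Lemma W_notin_Acc z : z \in W -> z \notin Acc -> z \in Sp :\: Acc /\ V z = 1.
Proof. by rewrite mem_W => /orP[->//|/andP[zS /eqP]]. Qed.

Lemma V_itv z : z \in Sp :\: Acc -> 0 <= V z <= 1.
Proof. by case: lfpV => _ [V01 _] _; apply: V01. Qed.

Lemma tvV_itv y : 0 <= tv V y <= 1.
Proof. exact: tval_itv V_itv y. Qed.

Lemma tvV_eq1 y : (tv V y == 1) = (y \in W).
Proof.
rewrite mem_W /Defs.tval; case: ifPn => yA; first by rewrite eqxx.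
by rewrite inE yA /=; case: ifPn => // _; rewrite eq_sym oner_eq0.
Qed.

Lemma bell_W y : y \in W -> bell M (tv V) y = 1.
Proof.
case: lfpV => [[fixV fixVout] _ _].
rewrite mem_W => /orP[yA|/andP[yS /eqP Vy1]]; first by rewrite -fixVout ?Vout1.
by rewrite -fixV.
Qed.

Lemma W_closed y : y \in W -> exists a, safe M W a y.
Proof.
move=> /bell_W /(bell_eq1 wfM tvV_itv)[a aA all1]; exists a; rewrite /safe aA.
apply/forallP => Th; apply/implyP => ThT; apply/subsetP => z zTh.
by rewrite -tvV_eq1 (all1 Th ThT z zTh).
Qed.

Definition attr_step (E : {set S}) : {set S} := E :|: [set y in W |
  [exists a, safe M W a y && [exists Th in trans M y a, Th \subset Acc :|: E]]].

Lemma attr_step_mono : {homo attr_step : E F / E \subset F}.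
Proof.
move=> E F EF; apply/subsetP => y; rewrite !inE => /orP[yE|/andP[-> /existsP[a]]].
  by rewrite (subsetP EF).
case/andP=> sa /existsP[Th /andP[ThT ThE]]; apply/orP; right; apply/existsP; exists a.
by rewrite sa; apply/existsP; exists Th; rewrite ThT (subset_trans ThE) ?setUS.
Qed.

Local Notation attr := (fixset attr_step).

Lemma attr_escape y a Th : y \in W -> y \notin attr -> safe M W a y -> Th \in trans M y a ->
  exists z, [/\ z \in Th, z \in W, z \notin Acc & z \notin attr].
Proof.
move=> yW y_attr sa ThT; move: y_attr; rewrite -{1}(fixsetK attr_step_mono).
rewrite in_setU negb_or inE yW /= => /andP[_ /existsPn/(_ a)].
rewrite sa /= => /existsPn/(_ Th); rewrite ThT /= => /subsetPn[z zTh].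
rewrite in_setU negb_or => /andP[zA z_attr]; exists z; split=> //.
by move: sa => /andP[_ /forallP/(_ Th)]; rewrite ThT => /subsetP; apply.
Qed.

Lemma unsafe_qval_lt1 : exists2 c, 0 <= c < 1 &
  forall y a, a \in act M y -> ~~ safe M W a y -> qval M (tv V) y a <= c.
Proof.
exists (\big[Num.max/0]_y \big[Num.max/0]_(a in act M y | ~~ safe M W a y)
          qval M (tv V) y a); last first.
  by move=> y a aA ua; apply: (bigmax_sup y) => //; apply: (bigmax_sup a); rewrite ?aA.
apply/andP; split; first by apply/bigmax_geP; left.
apply/bigmax_ltP; split=> // y _; apply/bigmax_ltP; split=> // a /andP[aA].
rewrite /safe aA => /forallPn[Th]; rewrite negb_imply => /andP[ThT /subsetPn[z zTh zW]].
apply: (qval_lt1 wfM tvV_itv aA ThT zTh).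
by rewrite lt_neqAle tvV_eq1 zW; case/andP: (tvV_itv z).
Qed.

(* By leastness, V is then at most [c] outside the attractor. *)
Lemma lowered_prefixed c : 0 <= c <= 1 ->
  (forall y a, a \in act M y -> ~~ safe M W a y -> qval M (tv V) y a <= c) ->
  prefixed M Sp Acc (fun z => if (z \in W) && (z \notin attr) then c else V z).
Proof.
set U := fun z => _; move=> c01 unsafe_le.
have UV z : z \in Sp :\: Acc -> U z <= V z.
  move=> zS; rewrite /U; case: ifP => // /andP[zW _].
  by have [_ ->] := W_notin_Acc zW (setDP zS).2; case/andP: c01.
split=> z zS.
  by rewrite /U; case: ifP => _; [exact: c01|exact: V_itv].
rewrite {2}/U; case: ifPn => [/andP[zW z_attr]|_]; last first.
  case: lfpV => [[fixV _] _ _]; rewrite [leRHS]fixV //.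
  by apply: le_bell => //; apply: le_tval.
rewrite bellE; apply/bigmax_leP; split; first by case/andP: c01.
move=> a aA; have [sa|ua] := boolP (safe M W a z); last first.
  by apply: le_trans (unsafe_le z a aA ua); apply: le_qval => //; apply: le_tval.
rewrite /qval -[leRHS]mul1r -(sum_prob wfM aA) mulr_suml.
apply: ler_sum => Th ThT; rewrite ler_wpM2l ?(prob_ge0 wfM) //.
have [w [wTh wW wA w_attr]] := attr_escape zW z_attr sa ThT.
apply: le_trans (bigmin_le_cond _ _ wTh) _.
have [wS _] := W_notin_Acc wW wA.
by rewrite /Defs.tval (negbTE wA) (setDP wS).1 /U wW w_attr.
Qed.

Lemma W_sub_attr : W \subset attr.
Proof.
have [c /andP[c0 c1] unsafe_le] := unsafe_qval_lt1.
have c01 : 0 <= c <= 1 by rewrite c0 ltW.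
have out_attr z : z \in W -> z \notin Acc -> z \in attr.
  move=> zW zA; apply: contraT => z_attr; have [zS Vz1] := W_notin_Acc zW zA.
  have := lfp_le_prefixed wfM lfpV (lowered_prefixed c01 unsafe_le) zS.
  by rewrite Vz1 zW z_attr leNgt c1.
apply/subsetP => y yW; apply: contraT => y_attr.
have [a sa] := W_closed yW.
have /set0Pn[Th ThT] := trans_neq0 wfM (andP sa).1.
have [z [_ zW zA z_attr]] := attr_escape yW y_attr sa ThT.
by rewrite out_attr in z_attr.
Qed.

End WinningRegion.

Section AttractorStrategy.
Variables (R : realType) (S A : finType) (M : mdpst R S A).
Hypothesis wfM : wf_mdpst M.
Variables (Sp Acc : {set S}) (V Vout : S -> R).
Hypotheses (lfpV : is_lfp M Sp Acc V Vout) (Vout1 : forall x, x \in Acc -> Vout x = 1).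
Variable a0 : A.

Local Notation W := (nextSp Sp Acc V Vout).
Local Notation F := (attr_step M Sp Acc V Vout).
Local Notation N := #|S|.

Let F_mono := attr_step_mono M Sp Acc V Vout.

(* [fix_order F y] is the attractor rank of [y]; a progress action has a
   target set inside [Acc] or of strictly smaller rank. *)
Definition progress a y := safe M W a y &&
  [exists Th in trans M y a, Th \subset Acc :|: iter (fix_order F y).-1 F set0].

Definition attr_act : S -> A := choose_act M a0 progress.

Definition attr_strategy : strategy R S A := memoryless R attr_act.

Lemma attr_act_in y : attr_act y \in act M y.
Proof. by apply: choose_act_in => // a /andP[/andP[]]. Qed.

Lemma attr_strategy_is_strategy : is_strategy M attr_strategy.
Proof. exact: memoryless_is_strategy attr_act_in. Qed.

Lemma attr_act_progress y k : y \in iter k.+1 F set0 ->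
  safe M W (attr_act y) y /\
  exists2 Th, Th \in trans M y (attr_act y) & Th \subset Acc :|: iter k F set0.
Proof.
move=> yk; move: (yk); rewrite (in_iter_fixE F_mono).
case Ey: (fix_order F y) => [//|j] /= jk.
have yj : y \in F (iter j F set0).
  rewrite -[F _]/(iter j.+1 F set0) -Ey in_iter_fix_orderE.
  exact: (subsetP (iter_sub_fix F_mono k.+1)).
have nyj : y \notin iter j F set0 by apply: (notin_iter F_mono); rewrite Ey.
move: yj; rewrite in_setU (negbTE nyj) inE => /andP[_ /existsP[a pa]].
have pa' : progress a y by rewrite /progress Ey.
have /andP[sa /existsP[Th /andP[ThT ThS]]] := choose_actP M a0 pa'.
split=> //; exists Th => //; apply: (subset_trans ThS); rewrite setUS // Ey.
exact: (subset_iter F_mono).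
Qed.

Lemma W_sub_attr_iter : W \subset iter N.-1.+1 F set0.
Proof.
apply/subsetP => y yW; rewrite prednK; last by apply/card_gt0P; exists y.
exact: (subsetP (W_sub_attr wfM lfpV Vout1)).
Qed.

Lemma attr_act_safe y : y \in W -> safe M W (attr_act y) y.
Proof. by move=> /(subsetP W_sub_attr_iter) /attr_act_progress[]. Qed.

Section Play.
Variables (ga : nature R S A) (x : S).
Hypothesis gaN : is_nature M ga.

Local Notation sgS := attr_strategy_is_strategy.
Local Notation Ex := (expect attr_strategy ga x).
Local Notation visits_after := (visits_after x Acc).
Local Notation avoids_from := (avoids_from x Acc).

Lemma attr_strategy_stays h a s : lst (x, h) \in W ->
  step attr_strategy ga x h (a, s) != 0 -> lst (x, rcons h (a, s)) \in W.
Proof.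
move=> hW st0; rewrite lst_rcons; apply: (step_safe sgS gaN _ st0).
have [/memoryless_gt0 -> _ _] := step_support sgS gaN st0.
exact: attr_act_safe.
Qed.

Lemma attr_step_ge h k f (b : R) Th : (forall t, 0 <= f t) -> 0 <= b ->
  Th \in trans M (lst (x, h)) (attr_act (lst (x, h))) ->
  (forall s, s \in Th -> b <= Ex (rcons h (attr_act (lst (x, h)), s)) k f) ->
  b * min_prob M <= Ex h k.+1 f.
Proof.
move=> f0 b0 ThT b_le.
have sg1 : attr_strategy (x, h) (attr_act (lst (x, h))) = 1.
  by rewrite /attr_strategy /memoryless eqxx.
apply: le_trans (expect_step_ge wfM sgS gaN f0 b0 sg1 ThT b_le).
by apply: ler_wpM2l => //; apply: (min_prob_le (attr_act_in _) ThT).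
Qed.

Lemma attr_reach k h : lst (x, h) \in iter k.+1 F set0 ->
  min_prob M ^+ k.+1 <= Ex h k.+1 (fun t => (visits_after (size h) t)%:R).
Proof.
have p0 : 0 <= min_prob M := ltW (min_prob_gt0 wfM).
have vis0 L (t : seq (A * S)) : 0 <= (visits_after L t)%:R :> R by rewrite ler0n.
have hit h' a s n : s \in Acc ->
    Ex (rcons h' (a, s)) n (fun t => (visits_after (size h') t)%:R) = 1.
  move=> sA; apply: (expect_eq_cst wfM x sgS gaN) => t _.
  by rewrite visits_after_cat ?visits_after_rcons.
elim: k h => [|k IH] h hk; have [_ [Th ThT ThS]] := attr_act_progress hk.
  rewrite expr1 -[leLHS]mul1r; apply: (attr_step_ge (vis0 _) ler01 ThT) => s sTh.
  by move: (subsetP ThS s sTh); rewrite setU0 => /hit ->.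
rewrite exprS mulrC; apply: (attr_step_ge (vis0 _) (exprn_ge0 _ p0) ThT) => s sTh.
case/setUP: (subsetP ThS s sTh) => [/hit -> | sk].
  exact: exprn_ile1 p0 (min_prob_le1 M).
have := IH (rcons h (attr_act (lst (x, h)), s)); rewrite lst_rcons => /(_ sk) /le_trans.
apply.
apply: (ler_expect_all wfM x sgS gaN) => t _; rewrite size_rcons ler_nat.
by case: (boolP (visits_after _ _)) => // /visits_afterS ->.
Qed.

Lemma attr_round_avoid h n : lst (x, h) \in W -> (n <= size h)%N ->
  Ex h N (fun t => (avoids_from n t)%:R) <= 1 - min_prob M ^+ N.
Proof.
move=> hW nh.
apply: le_trans (_ : Ex h N (fun t => 1 - (visits_after (size h) t)%:R) <= _).
  apply: (ler_expect_all wfM x sgS gaN) => t _.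
  case: (boolP (avoids_from n _)) => [/(avoids_from_visits_after nh)/negbTE ->|_].
    by rewrite subr0.
  by rewrite subr_ge0 lern1 leq_b1.
rewrite expectB (expect_cst wfM x sgS gaN) lerD2l lerN2.
have := attr_reach (subsetP W_sub_attr_iter _ hW).
by rewrite prednK //; apply/card_gt0P; exists (lst (x, h)).
Qed.

Lemma attr_avoid_le j h n : lst (x, h) \in W -> (n <= size h)%N ->
  Ex h (j * N) (fun t => (avoids_from n t)%:R) <= (1 - min_prob M ^+ N) ^+ j.
Proof.
set q := 1 - _; have q0 : 0 <= q.
  by rewrite subr_ge0 exprn_ile1 ?(min_prob_le1 M) // ltW ?(min_prob_gt0 wfM).
elim: j h => [|j IH] h hW nh; first by rewrite mul0n expect0 expr0 lern1 leq_b1.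
rewrite mulSn (expect_split attr_strategy ga x) exprSr.
apply: le_trans (_ : Ex h N (fun h' => q ^+ j * (avoids_from n h')%:R) <= _).
  apply: (@ler_expect _ _ _ _ wfM _ _ x sgS gaN (fun h => lst (x, h) \in W)) => //.
    exact: attr_strategy_stays.
  move=> t _ tW; have [avoid|] := boolP (avoids_from n (h ++ t)).
    by rewrite mulr1 IH // size_cat (leq_trans nh) ?leq_addr.
  move=> not_avoid; rewrite mulr0 (expect_eq_cst wfM x sgS gaN (c := 0)) // => u _.
  by apply/eqP; rewrite pnatr_eq0 eqb0; apply: contra not_avoid => /avoids_from_cat.
by rewrite (expectZ attr_strategy ga x) ler_wpM2l ?exprn_ge0 // attr_round_avoid.
Qed.

Lemma attr_strategy_buchi (AccX : {set S}) : Acc \subset AccX -> x \in W ->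
  prBuchi attr_strategy ga x AccX = 1.
Proof.
move=> AccS xW; apply: inf_range_cst => n; apply: sup_range_eq1 => [K|e e0].
  exact: (prN_le1 wfM x sgS gaN).
set q := 1 - min_prob M ^+ N.
have q01 : 0 <= q < 1.
  rewrite subr_ge0 exprn_ile1 ?(min_prob_le1 M) ?ltW ?(min_prob_gt0 wfM) //=.
  by rewrite ltrBlDr ltrDl exprn_gt0 ?(min_prob_gt0 wfM).
have [j qj] := exists_expr_lt q01 e0.
exists (n + j * N)%N; rewrite prNE.
apply: lt_le_trans (_ : 1 - q ^+ j <= _); first by rewrite ltrD2l ltrN2.
apply: le_trans (_ : Ex [::] (n + j * N) (fun t => 1 - (avoids_from n t)%:R) <= _).
  rewrite expectB (expect_cst wfM x sgS gaN) lerD2l lerN2 (expect_split attr_strategy ga x).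
  rewrite -[leRHS](expect_cst wfM x sgS gaN [::] n).
  apply: (@ler_expect _ _ _ _ wfM _ _ x sgS gaN (fun h => lst (x, h) \in W)) => //.
    exact: attr_strategy_stays.
  by move=> t tn tW; apply: attr_avoid_le; rewrite ?tn.
apply: (ler_expect_all wfM x sgS gaN) => t tn /=.
have [_|] := boolP (avoids_from n t); first by rewrite subrr ler0n.
rewrite subr0 ler1n lt0b negb_forall => /existsP[m]; rewrite negb_imply negbK => /andP[nm mA].
have mlt : (m < (n + j * N).+1)%N by rewrite -tn ltn_ord.
by apply/existsP; exists (Ordinal mlt); rewrite /= nm (subsetP AccS).
Qed.

End Play.
End AttractorStrategy.

Section Values.
Variables (R : realType) (S A : finType) (M : mdpst R S A).
Hypothesis wfM : wf_mdpst M.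
Variable a0 : A.
Implicit Types (f g : strategy R S A -> nature R S A -> S -> R) (x : S).

Definition point_weight (Th : {set S}) (s' : S) : R :=
  if [pick z in Th] is Some z then (s' == z)%:R else 0.

Definition point_nature : nature R S A := fun p a s' =>
  if s' \in post M (lst p) a then
    \sum_(Th in trans M (lst p) a | s' \in Th) point_weight Th s' * prob M (lst p) a Th
  else 0.

Lemma point_nature_is_nature : is_nature M point_nature.
Proof.
move=> p a aA; exists point_weight; split=> [Th s'|Th ThT|s' sP|s' sP].
- by rewrite /point_weight; case: pickP => [z _|_]; rewrite ?ler0n.
- rewrite /point_weight; case: pickP => [z zTh|none]; last first.
    by have /set0Pn[z zTh] := target_neq0 wfM aA ThT; move: (none z); rewrite zTh.
  by rewrite (bigD1 z) //= eqxx big1 ?addr0 // => s' /andP[_ /negbTE ->].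
- by rewrite /point_nature sP.
- by rewrite /point_nature (negbTE sP).
Qed.

Lemma some_strategy_is_strategy : is_strategy M (memoryless R (some_act M a0)).
Proof. exact: memoryless_is_strategy (some_act_in wfM a0). Qed.

Definition worst_case f sg x : R :=
  inf (fun r : R => exists ga, is_nature M ga /\ r = f sg ga x).

Section WorstCase.
Variables (f : strategy R S A -> nature R S A -> S -> R) (sg : strategy R S A) (x : S).
Hypothesis f01 : forall ga, is_nature M ga -> 0 <= f sg ga x <= 1.

Lemma worst_case_le ga : is_nature M ga -> worst_case f sg x <= f sg ga x.
Proof.
move=> gaN; apply: ge_inf; last by exists ga.
by exists 0 => _ [ga' [gaN' ->]]; case/andP: (f01 gaN').
Qed.

Lemma worst_case_itv : 0 <= worst_case f sg x <= 1.
Proof.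
have gaN := point_nature_is_nature.
rewrite (le_trans (worst_case_le gaN)) ?andbT; last by case/andP: (f01 gaN).
apply: lb_le_inf; first by exists (f sg point_nature x), point_nature.
by move=> _ [ga [gaN' ->]]; case/andP: (f01 gaN').
Qed.

End WorstCase.

Lemma le_value x f g :
  (forall sg ga, is_strategy M sg -> is_nature M ga -> 0 <= f sg ga x <= 1) ->
  (forall sg ga, is_strategy M sg -> is_nature M ga -> 0 <= g sg ga x <= 1) ->
  (forall sg, is_strategy M sg -> exists2 sg', is_strategy M sg' &
     forall ga, is_nature M ga -> f sg ga x <= g sg' ga x) ->
  value M x f <= value M x g.
Proof.
move=> f01 g01 fg; have gaN0 := point_nature_is_nature; apply: ge_sup.
  exists (worst_case f (memoryless R (some_act M a0)) x), (memoryless R (some_act M a0)).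
  by split; first exact: some_strategy_is_strategy.
move=> _ [sg [sgS ->]]; have [sg' sgS' le_fg] := fg sg sgS.
apply: le_trans (_ : worst_case g sg' x <= _).
  apply: lb_le_inf; first by exists (g sg' point_nature x), point_nature; split.
  move=> _ [ga [gaN ->]]; apply: le_trans (le_fg ga gaN).
  exact: (worst_case_le (fun ga => f01 sg ga sgS) gaN).
apply: ub_le_sup; last by exists sg'.
by exists 1 => _ [sg'' [sgS'' ->]]; case/andP: (worst_case_itv (fun ga => g01 sg'' ga sgS'')).
Qed.

Lemma prEv_itv sg ga x W : is_strategy M sg -> is_nature M ga -> 0 <= prEv sg ga x W <= 1.
Proof.
by move=> sgS gaN; apply: sup_range_itv => N; rewrite (prN_ge0 wfM) ?(prN_le1 wfM).
Qed.

Lemma prEvAlw_itv sg ga x W : is_strategy M sg -> is_nature M ga ->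
  0 <= prEvAlw sg ga x W <= 1.
Proof.
move=> sgS gaN; apply: sup_range_itv => n; apply: inf_range_itv => N.
by rewrite (prN_ge0 wfM) ?(prN_le1 wfM).
Qed.

Lemma prEvAlw_le_prEv sg ga x W : is_strategy M sg -> is_nature M ga ->
  prEvAlw sg ga x W <= prEv sg ga x W.
Proof.
move=> sgS gaN; apply: ge_sup_range => n.
apply: le_trans (@ge_inf_range _ _ 0 n _) _ => [N|]; first exact: (prN_ge0 wfM x sgS gaN).
apply: le_trans (@le_sup_range _ _ 1 n _) => [|N]; last exact: (prN_le1 wfM x sgS gaN).
rewrite !prNE; apply: (ler_expect_all wfM x sgS gaN) => t _.
rewrite ler_nat; case: (boolP [exists m : 'I_n.+1, _]) => [_|]; first exact: leq_b1.
by rewrite leqn0 eqb0; apply: contra => /forallP/(_ ord_max); rewrite leqnn => mW;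
  apply/existsP; exists ord_max.
Qed.

End Values.

Section Safety.
Variables (R : realType) (S A : finType) (M : mdpst R S A).
Hypothesis wfM : wf_mdpst M.
Variable W : {set S}.
Hypothesis W_closed : forall y, y \in W -> exists a, safe M W a y.
Variable a0 : A.

Definition stay_act : S -> A := choose_act M a0 (safe M W).

Definition visited (p : Defs.fpath S A) : bool :=
  [exists m : 'I_(size p.2).+1, state p.1 p.2 m \in W].

Definition stay_after (sg : strategy R S A) : strategy R S A :=
  fun p => if visited p then memoryless R stay_act p else sg p.

Lemma stay_act_in y : stay_act y \in act M y.
Proof. by apply: choose_act_in => // a /andP[]. Qed.

Lemma stay_act_safe y : y \in W -> safe M W (stay_act y) y.
Proof. by case/W_closed => a; apply: choose_actP. Qed.

Lemma stay_after_is_strategy sg : is_strategy M sg -> is_strategy M (stay_after sg).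
Proof.
move=> sgS p; rewrite /stay_after; case: (visited p); last exact: sgS.
exact: (memoryless_is_strategy stay_act_in p).
Qed.

Section Play.
Variables (sg : strategy R S A) (ga : nature R S A) (x : S).
Hypotheses (sgS : is_strategy M sg) (gaN : is_nature M ga).

Let sgS' := stay_after_is_strategy sgS.

Lemma visited_cat h t : visited (x, h) -> visited (x, h ++ t).
Proof. exact: (@exists_state_cat _ _ x (fun _ s => s \in W)). Qed.

Lemma expect_stay_after_visited n h :
  expect (stay_after sg) ga x h n (fun t => (visited (x, t))%:R) =
  expect sg ga x h n (fun t => (visited (x, t))%:R).
Proof.
elim: n h => [|n IH] h; first by rewrite !expect0.
have [vh|nvh] := boolP (visited (x, h)).
  rewrite (expect_eq_cst wfM x sgS' gaN (c := 1)) ?(expect_eq_cst wfM x sgS gaN (c := 1)) //.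
    by move=> t _; rewrite visited_cat.
  by move=> t _; rewrite visited_cat.
by rewrite !expectS; apply: eq_bigr => st _; rewrite IH /step /stay_after (negbTE nvh).
Qed.

Definition W_absorbing (h : seq (A * S)) := forall m m', (m <= m' <= size h)%N ->
  state x h m \in W -> state x h m' \in W.

Lemma W_absorbing_nil : W_absorbing [::].
Proof.
move=> m m' /andP[mm' m'0]; have -> // : m' = m.
by apply/anti_leq; rewrite mm' (leq_trans m'0).
Qed.

Lemma W_absorbing_rcons h a s : W_absorbing h ->
  step (stay_after sg) ga x h (a, s) != 0 -> W_absorbing (rcons h (a, s)).
Proof.
move=> absh st0 m m' /andP[mm' m'h1]; rewrite size_rcons in m'h1.
have [m'E|m'h] := eqVneq m' (size h).+1; last first.
  have m'h' : (m' <= size h)%N by rewrite -ltnS ltn_neqAle m'h m'h1.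
  by rewrite -cats1 !state_cat ?(leq_trans mm') //; apply: absh; rewrite mm'.
subst m'; rewrite state_rcons; have [->|mh] := eqVneq m (size h).+1.
  by rewrite state_rcons.
have {}mh : (m <= size h)%N by rewrite -ltnS ltn_neqAle mh mm'.
rewrite -cats1 state_cat // => mW.
have hW : lst (x, h) \in W by rewrite lst_state (absh m) ?mh.
have vh : visited (x, h) by apply/existsP; exists (Ordinal (mh : (m < (size h).+1)%N)).
apply: (step_safe sgS' gaN _ st0).
have [] := step_support sgS' gaN st0; rewrite /stay_after vh => /memoryless_gt0 -> _ _.
exact: stay_act_safe.
Qed.

Lemma prN_reach_le_stay N K : (N <= K)%N ->
  prN sg ga x N (fun t => [exists m : 'I_N.+1, state x t m \in W]) <=
  prN (stay_after sg) ga x K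
    (fun t => [forall m : 'I_K.+1, (N <= m)%N ==> (state x t m \in W)]).
Proof.
move=> NK; rewrite !prNE -(subnKC NK) (expect_split (stay_after sg) ga x).
rewrite (eq_expect sg ga x (g := fun t => (visited (x, t))%:R)) => [|t tN]; last first.
  by rewrite /visited /= tN.
rewrite -expect_stay_after_visited.
apply: (@ler_expect _ _ _ _ wfM _ _ x sgS' gaN W_absorbing) => //.
- exact: W_absorbing_rcons.
- exact: W_absorbing_nil.
move=> t tN abs_t /=; have [/existsP[m mW]|_] := boolP (visited (x, t)); last first.
  by apply: (expect_ge0 wfM x sgS' gaN) => u; rewrite ler0n.
rewrite -[leLHS](expect_cst wfM x sgS' gaN t (K - N) 1).
apply: (@ler_expect _ _ _ _ wfM _ _ x sgS' gaN W_absorbing) => //.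
  exact: W_absorbing_rcons.
move=> u uK abs_u; rewrite ler1n lt0b; apply/forallP => m'; apply/implyP => Nm'.
have mt : (m <= size t)%N by rewrite -ltnS.
have mm' : (m <= m')%N by rewrite (leq_trans mt) // tN.
have m'tu : (m' <= size (t ++ u))%N by rewrite size_cat uK tN -ltnS ltn_ord.
by apply: (abs_u m); rewrite ?mm' ?m'tu ?state_cat.
Qed.

Lemma prEv_le_prEvAlw : prEv sg ga x W <= prEvAlw (stay_after sg) ga x W.
Proof.
apply: ge_sup_range => N.
apply: le_trans (_ : inf (range (fun K => prN (stay_after sg) ga x K
    (fun t => [forall m : 'I_K.+1, (N <= m)%N ==> (state x t m \in W)]))) <= _).
  apply: le_inf_range => K; have [NK|KN] := leqP N K; first exact: prN_reach_le_stay.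
  apply: le_trans (prN_le1 wfM x sgS gaN _ _) _.
  rewrite prNE (expect_eq_cst wfM x sgS' gaN (c := 1)) // => t _.
  apply/eqP; rewrite pnatr_eq1 eqb1; apply/forallP => m; apply/implyP => Nm.
  by have := leq_ltn_trans Nm (ltn_ord m); rewrite ltnS leqNgt KN.
apply: (@le_sup_range _ _ 1 N) => n.
apply: le_trans (@ge_inf_range _ _ 0 0%N _) _ => [K|]; first exact: (prN_ge0 wfM x sgS' gaN).
exact: (prN_le1 wfM x sgS' gaN).
Qed.

End Play.

Lemma value_prEvAlw_prEv x0 :
  value M x0 (fun sg ga x => prEvAlw sg ga x W) = value M x0 (fun sg ga x => prEv sg ga x W).
Proof.
have alw01 sg ga := @prEvAlw_itv R S A M wfM sg ga x0 W.
have ev01 sg ga := @prEv_itv R S A M wfM sg ga x0 W.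
apply/eqP; rewrite eq_le !(le_value wfM a0) //.
- move=> sg sgS; exists (stay_after sg); first exact: stay_after_is_strategy.
  by move=> ga gaN; apply: prEv_le_prEvAlw.
- move=> sg sgS; exists sg => // ga gaN; exact: prEvAlw_le_prEv.
Qed.

End Safety.

Lemma compW_output (R : realType) (S A : finType) (M : mdpst R S A) Sp Acc W :
  compW M Sp Acc W -> W = set0 \/ exists (Sp' Acc' : {set S}) (V Vout : S -> R),
    [/\ Acc' \subset Acc, is_lfp M Sp' Acc' V Vout, (forall x, x \in Acc' -> Vout x = 1)
      & W = nextSp Sp' Acc' V Vout].
Proof.
elim=> {Sp Acc W} [Sp Acc _|Sp Acc V Vout _ lfpV Vout1|Sp Acc V Vout W _ _ _ _ [->|IH]].
- by left.
- by right; exists Sp, Acc, V, Vout.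
- by left.
right; move: IH => [Sp' [Acc' [V' [Vout' [sub lfpV' Vout1 ->]]]]].
exists Sp', Acc', V', Vout'; split=> //; apply: subset_trans sub _.
by apply/subsetP => y; rewrite inE => /andP[].
Qed.

Theorem computeW_winning (R : realType) (S A : finType) (M : mdpst R S A) (AccX W : {set S}) :
  wf_mdpst M -> computeW M AccX W ->
  (forall x, x \in W -> exists sg, is_strategy M sg /\
       forall ga, is_nature M ga -> prBuchi sg ga x AccX = 1) /\
  value M (init M) (fun sg ga x => prEvAlw sg ga x W)
  = value M (init M) (fun sg ga x => prEv sg ga x W).
Proof.
move=> wfM /compW_output W_out; have /set0Pn[a0 _] := act_neq0 wfM (init M).
case: W_out => [->|[Sp [Acc [V [Vout [sub lfpV Vout1 ->]]]]]].
  have set0_closed y : y \in set0 -> exists a, safe M set0 a y by rewrite inE.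
  by split=> [x|]; [rewrite inE|exact: (value_prEvAlw_prEv wfM set0_closed a0)].
have AccS : Acc \subset AccX := subset_trans sub (subsetIl _ _).
split=> [x xW|]; last exact: (value_prEvAlw_prEv wfM (W_closed wfM lfpV Vout1) a0).
exists (attr_strategy M Sp Acc V Vout a0); split=> [|ga gaN].
  exact: attr_strategy_is_strategy.
exact: (attr_strategy_buchi wfM lfpV Vout1 a0 gaN AccS xW).
Qed.

Section ProductWellFormed.
Variables (R : realType) (S A AP Qi Qa : finType).
Variables (M : mdpst R S A) (L : S -> {set AP}) (B : ldba AP Qi Qa).
Hypothesis wfM : wf_mdpst M.

Lemma mem_pact_inl (x : S * Q Qi Qa) a : (inl a \in pact M B x) = (a \in act M x.1).
Proof.
rewrite /pact in_setU (mem_imset _ _ (@inl_inj _ _)).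
by case: x.2 => [qi|qa]; rewrite ?in_set0 ?orbF //; case: imsetP => [[]|]; rewrite ?orbF.
Qed.

Lemma wf_product : wf_mdpst (product M L B).
Proof.
move=> [s q]; have [/set0Pn[a0 a0A] wf_s] := wfM s; split.
  by apply/set0Pn; exists (inl a0); rewrite mem_pact_inl.
case=> [a|q'] /=; last first.
  move=> bA; rewrite /ptrans /pprob bA big_set1; split=> // [|_ /set1P ->].
    by apply/set0Pn; exists [set (s, q')]; rewrite in_set1.
  by split; [apply/set0Pn; exists (s, q'); rewrite in_set1|rewrite ltr01 lexx].
rewrite mem_pact_inl => aA; have [trans_a target_a sum_a] := wf_s a aA.
set q1 := delta B q (L s).
have liftK Th : [set s0 | (s0, q1) \in setX Th [set q1]] = Th.
  by apply/setP => z; rewrite !inE eqxx andbT.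
rewrite /ptrans /pprob -/q1; split.
- have /set0Pn[Th ThT] := trans_a.
  by apply/set0Pn; exists (setX Th [set q1]); apply: imset_f.
- move=> _ /imsetP[Th ThT ->]; rewrite liftK; have [/set0Pn[z zTh] p01] := target_a Th ThT.
  by split=> //; apply/set0Pn; exists (z, q1); rewrite in_setX in_set1 zTh eqxx.
rewrite big_imset /=; first by under eq_bigr do rewrite liftK.
by move=> T1 T2 _ _ /= eq12; rewrite -[T1]liftK eq12 liftK.
Qed.

End ProductWellFormed.

Theorem mainTheorem2 (R : realType) (S A AP Qi Qa : finType)
    (M : mdpst R S A) (L : S -> {set AP}) (B : ldba AP Qi Qa)
    (W : {set (S * Q Qi Qa)%type}) :
  wf_mdpst M ->
  computeW (product M L B) (accX B) W ->
  (forall x, x \in W ->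
     exists sg, is_strategy (product M L B) sg /\
       forall ga, is_nature (product M L B) ga ->
         prBuchi sg ga x (accX B) = 1) /\
  value (product M L B) (init (product M L B)) (fun sg ga x => prEvAlw sg ga x W)
  = value (product M L B) (init (product M L B)) (fun sg ga x => prEv sg ga x W).
Proof. by move=> wfM; apply: computeW_winning; apply: wf_product. Qed.
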